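(* Let $q$ be a prime power, let $X^2+\mu X+\lambda$ be a primitive polynomial of degree $2$ over $\mathbb F_q$, and let $x=\begin{pmatrix}0&1\\-\lambda&-\mu\end{pmatrix}\in GL_2(q)$, with image $\bar x\in PGL_2(q)$; set $C=\langle \bar x\rangle$ (a Singer cycle) and let $S\le PGL_2(q)$ be the image of the group of invertible upper triangular matrices $\begin{pmatrix}a&b\\0&c\end{pmatrix}$ ($a,c\in\mathbb F_q^*$, $b\in\mathbb F_q$). Consider the right action of $S$ on $C$ given by $s:c\mapsto c^{[s]}$, where $cs=s'c^{[s]}$ with $s'\in S$, $c^{[s]}\in C$. Let $u_1,\dots,u_q$ be the elements of the image $U\le S$ in $PGL_2(q)$ of the matrices $\begin{pmatrix}d&t\\0&d\end{pmatrix}$ ($d\in\mathbb F_q^*$, $t\in\mathbb F_q$). Then $\bar x^{[u_1]},\dots,\bar x^{[u_q]}$ are distinct. In particular the action of $S$ on $C\setminus\{1\}$ is transitive.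
   Context: $PGL_2(q)=CS$ with $C\cap S=1$, so every element $cs$ with $c\in C$, $s\in S$ can be uniquely written as $s'c'$ with $s'\in S$, $c'\in C$, and $c^{[s]}:=c'$ defines a right action of $S$ on $C$. *)

From HB Require Import structures.
From mathcomp Require Import all_boot all_order all_algebra all_fingroup all_field.
Set Implicit Arguments. Unset Strict Implicit. Unset Printing Implicit Defensive.
Import GRing.Theory.
Local Open Scope ring_scope.

Section PGL2.
Variable F : finFieldType.

Definition GL2 := {'GL_2[F]}.
Definition scal2 : {set GL2} := [set g : GL2 | is_scalar_mx (GLval g)].
Definition PGL2 := coset_of scal2.
Definition proj2 (g : GL2) : PGL2 := coset scal2 g.

(* the matrix M as an element of GL_2(F) (identity if M is singular) *)
Definition toGL (M : 'M[F]_2) : GL2 := insubd (1%g : GL2) M.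

Definition companion2 (mu lam : F) : 'M[F]_2 :=
  \matrix_(i < 2, j < 2)
    if (i == 0 :> nat) then (if (j == 0 :> nat) then 0 else 1)
    else (if (j == 0 :> nat) then - lam else - mu).

Definition upper2 : {set GL2} := [set g : GL2 | GLval g ord_max ord0 == 0].
Definition unipscal2 : {set GL2} :=
  [set g : GL2 | (GLval g ord_max ord0 == 0) && (GLval g ord0 ord0 == GLval g ord_max ord_max)].

Definition Sgrp : {set PGL2} := proj2 @: upper2.
Definition Ugrp : {set PGL2} := proj2 @: unipscal2.

(* c^[s] : the element c' of C with c s = s' c' for some s' in S (1 if none) *)
Definition bract (C : {set PGL2}) (c s : PGL2) : PGL2 :=
  odflt 1%g [pick c' in C | (c * s)%g \in (Sgrp :* c')%g].

End PGL2.

From HB Require Import structures.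
From mathcomp Require Import all_boot all_order all_algebra all_fingroup all_field.
From mathcomp Require Import ring.
Set Implicit Arguments. Unset Strict Implicit. Unset Printing Implicit Defensive.
Import GRing.Theory.
Local Open Scope ring_scope.

(* Two elements of PGL_2 lie in the same right coset of S iff their lifts have
   proportional bottom rows, so c^[s] is the element of C whose lift has its bottom
   row proportional to that of c s.  The lifts of C are the nonzero matrices
   a x + b, with bottom rows (-lam a, b - mu a); as x has a primitive minimal
   polynomial, these meet every line of F^2, and proportional ones give the same
   point of PGL_2.  For u = [[d, t], [0, d]] the bottom row of x u is
   (-lam d, -lam t - mu d), which determines t / d and hence u.  Transitivity:
   right multiplication by [[1, b], [0, 1]] turns a bottom row (r0, r1) into
   (r0, r1 + b r0), and lifts of nontrivial elements of C have r0 <> 0. *)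

Local Notation i0 := (ord0 : 'I_2).
Local Notation i1 := (ord_max : 'I_2).

Section Matrix2.
Variable R : comPzRingType.
Implicit Types A B M : 'M[R]_2.

Lemma mulmx2E A B i j : (A *m B) i j = A i i0 * B i0 j + A i i1 * B i1 j.
Proof.
rewrite mxE !big_ord_recl big_ord0 addr0.
by have -> : lift ord0 (ord0 : 'I_1) = i1 by apply: val_inj.
Qed.

Lemma matrix2P A B :
  A i0 i0 = B i0 i0 -> A i0 i1 = B i0 i1 -> A i1 i0 = B i1 i0 ->
  A i1 i1 = B i1 i1 -> A = B.
Proof.
move=> e00 e01 e10 e11; apply/matrixP => i j.
have ord2 (k : 'I_2) : k = i0 \/ k = i1.
  by case: k => [[|[|k]] Hk] //; [left|right]; apply: val_inj.
by case: (ord2 i) => ->; case: (ord2 j) => ->.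
Qed.

Lemma det_mx22 A : \det A = A i0 i0 * A i1 i1 - A i0 i1 * A i1 i0.
Proof.
rewrite (expand_det_row _ i0) !big_ord_recl big_ord0 addr0 /cofactor !det_mx11.
have lift01 : lift i0 (ord0 : 'I_1) = i1 by apply: val_inj.
have lift10 : lift i1 (ord0 : 'I_1) = i0 by apply: val_inj.
rewrite !mxE !lift01 lift10 /= expr0 expr1; ring.
Qed.

Definition bottom_cross A B := A i1 i0 * B i1 i1 - A i1 i1 * B i1 i0.

Lemma bottom_crossC A B : bottom_cross B A = - bottom_cross A B.
Proof. by rewrite /bottom_cross; ring. Qed.

Lemma bottom_cross_mull M B : bottom_cross (M *m B) B = M i1 i0 * \det B.
Proof. by rewrite /bottom_cross det_mx22 !mulmx2E; ring. Qed.

Lemma bottom_cross_mul_unipscal M A B :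
  A i1 i0 = 0 -> A i0 i0 = A i1 i1 -> B i1 i0 = 0 -> B i0 i0 = B i1 i1 ->
  bottom_cross (M *m A) (M *m B) = M i1 i0 ^+ 2 * (A i1 i1 * B i0 i1 - A i0 i1 * B i1 i1).
Proof.
move=> A10 A00 B10 B00.
by rewrite /bottom_cross !mulmx2E A10 A00 B10 B00; ring.
Qed.

End Matrix2.

Section Matrix2Field.
Variable F : fieldType.
Implicit Types (A B M : 'M[F]_2) (x : F).

Lemma bottom_row_neq0 A : \det A != 0 -> (A i1 i0 != 0) || (A i1 i1 != 0).
Proof.
rewrite det_mx22; apply: contraR; rewrite negb_or !negbK => /andP[/eqP-> /eqP->].
by rewrite !mulr0 subrr.
Qed.

Lemma bottom_cross_trans M A B : \det M != 0 ->
  bottom_cross M A = 0 -> bottom_cross M B = 0 -> bottom_cross A B = 0.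
Proof.
move=> detM MA MB.
have e0 : bottom_cross A B * M i1 i0 = bottom_cross M B * A i1 i0 - bottom_cross M A * B i1 i0.
  by rewrite /bottom_cross; ring.
have e1 : bottom_cross A B * M i1 i1 = bottom_cross M B * A i1 i1 - bottom_cross M A * B i1 i1.
  by rewrite /bottom_cross; ring.
rewrite MA MB !mul0r subrr in e0 e1.
by case/orP: (bottom_row_neq0 detM) => /mulIf inj; apply: inj; rewrite mul0r.
Qed.

Lemma cross_eq0_proportional x1 y1 x2 y2 : (x2 != 0) || (y2 != 0) ->
  x1 * y2 = y1 * x2 -> exists c, x1 = c * x2 /\ y1 = c * y2.
Proof.
case: (eqVneq x2 0) => [-> /= y2n | x2n _] e.
  exists (y1 / y2); split; last by rewrite mulfVK.
  by apply: (mulIf y2n); rewrite e !mulr0 mul0r.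
by exists (x1 / x2); split; [rewrite mulfVK | rewrite mulrAC e mulfK].
Qed.

Definition unitri2 x : 'M[F]_2 := 1%:M + x *: delta_mx i0 i1.

Lemma unitri2E x :
  (unitri2 x i0 i0 = 1) * (unitri2 x i0 i1 = x) * (unitri2 x i1 i0 = 0) * (unitri2 x i1 i1 = 1).
Proof. by rewrite !mxE /=; repeat split; ring. Qed.

Lemma unitri2_unit x : unitri2 x \in unitmx.
Proof. by rewrite unitmxE det_mx22 !unitri2E mulr0 mulr1 subr0 unitr1. Qed.

Lemma bottom_cross_unitri2 A B : A i1 i0 != 0 -> B i1 i0 != 0 ->
  bottom_cross (A *m unitri2 (B i1 i1 / B i1 i0 - A i1 i1 / A i1 i0)) B = 0.
Proof.
move=> An Bn; rewrite /bottom_cross !mulmx2E !unitri2E.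
by field; rewrite An Bn.
Qed.

End Matrix2Field.

Section Companion.
Variable F : finFieldType.
Variables mu lam : F.
Local Notation X := (companion2 mu lam).
Local Notation p := ('X^2 + mu *: 'X + lam%:P : {poly F}).

Lemma companion2E : (X i0 i0 = 0) * (X i0 i1 = 1) * (X i1 i0 = - lam) * (X i1 i1 = - mu).
Proof. by rewrite !mxE. Qed.

Lemma companion2_linE (a b : F) :
  ((a *: X + b%:M) i0 i0 = b) * ((a *: X + b%:M) i0 i1 = a) *
  ((a *: X + b%:M) i1 i0 = - lam * a) * ((a *: X + b%:M) i1 i1 = - mu * a + b).
Proof. by rewrite !mxE /= !mulr0n !mulr1n; repeat split; ring. Qed.

Lemma companion2_lin_mulX (a b : F) :
  (a *: X + b%:M) *m X = (b - mu * a) *: X + (- lam * a)%:M.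
Proof. by apply: matrix2P; rewrite mulmx2E !companion2_linE !companion2E; ring. Qed.

Lemma companion2_exp_lin k : exists a b, X ^+ k = a *: X + b%:M.
Proof.
elim: k => [|k [a [b IH]]]; first by exists 0, 1; rewrite scale0r add0r expr0.
by exists (b - mu * a), (- lam * a); rewrite exprSr IH -companion2_lin_mulX mulmxE.
Qed.

Lemma horner_companion2 : horner_mx X p = 0.
Proof.
have sqrX : X *m X = - mu *: X - lam%:M.
  by apply: matrix2P; rewrite mulmx2E !companion2E !mxE /=; ring.
rewrite -mul_polyC !rmorphD rmorphXn rmorphM /= !horner_mx_C horner_mx_X.
rewrite expr2 -mulmxE sqrX mul_scalar_mx.
by apply: matrix2P; rewrite !mxE /=; ring.
Qed.

Lemma bottom_cross_companion2_lin (a1 b1 a2 b2 : F) :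
  bottom_cross (a1 *: X + b1%:M) (a2 *: X + b2%:M) = lam * (b1 * a2 - a1 * b2).
Proof. by rewrite /bottom_cross !companion2_linE; ring. Qed.

Lemma companion2_polyE : p = ('X + mu%:P) * 'X + lam%:P.
Proof. by rewrite mulrDl -expr2 mul_polyC. Qed.

Lemma size_companion2_poly : size p = 3%N.
Proof.
rewrite companion2_polyE size_MXaddC size_XaddC.
by rewrite -size_poly_eq0 size_XaddC.
Qed.

Hypothesis p_primitive : primitive_poly p.

Lemma primitive_companion2_lam_neq0 : lam != 0.
Proof.
case/primitive_polyP: p_primitive => [[[_ p_irr] _] _ _]; apply/negP => /eqP lam0.
have : 'X + mu%:P %= p.
  by apply: p_irr; rewrite ?size_XaddC // companion2_polyE lam0 addr0 dvdp_mulr.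
by move/eqp_size; rewrite size_companion2_poly size_XaddC.
Qed.

Lemma companion2_unit : X \in unitmx.
Proof.
rewrite unitmxE det_mx22 !companion2E mul0r sub0r mul1r opprK unitfE.
exact: primitive_companion2_lam_neq0.
Qed.

(* X generates the unit group of F[X]/(p), realised as the matrices a X + b. *)
Lemma companion2_exp_surj (a b : F) : (a != 0) || (b != 0) ->
  exists k, X ^+ k = a *: X + b%:M.
Proof.
move=> ab; set r := a%:P * 'X + b%:P.
have size_r : size r = if (a == 0) && (b == 0) then 0%N else (size a%:P).+1.
  by rewrite /r size_MXaddC polyC_eq0.
have r_neq0 : r != 0.
  by rewrite -size_poly_eq0 size_r; case: (a == 0) ab; case: (b == 0).
have p_ndvd_r : ~~ (p %| r).
  apply/negP => /(dvdp_leq r_neq0); rewrite size_companion2_poly size_r size_polyC.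
  by case: (a == 0) ab; case: (b == 0).
have size_p_gt2 : (2 < size p)%N by rewrite size_companion2_poly.
have /dvdpP[q r_Xk] := plogp_X size_p_gt2 p_primitive p_ndvd_r.
exists (plogp p r); apply/eqP; rewrite eq_sym -subr_eq0.
have : horner_mx X (r - 'X^(plogp p r)) = 0.
  by rewrite r_Xk rmorphM /= horner_companion2 mulr0.
rewrite rmorphB rmorphXn /r rmorphD rmorphM /= !horner_mx_C horner_mx_X.
by rewrite -mulmxE mul_scalar_mx => ->.
Qed.

Lemma companion2_lin_det_neq0 (a b : F) :
  \det (a *: X + b%:M) != 0 -> (a != 0) || (b != 0).
Proof.
apply: contraTT; rewrite negb_or !negbK => /andP[/eqP-> /eqP->].
by rewrite scale0r add0r det_scalar expr0n.
Qed.

End Companion.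

Section PGL2.
Variable F : finFieldType.
Local Notation GL2 := {'GL_2[F]}.
Implicit Types a b : GL2.

Lemma scal2_group_set : group_set (scal2 F).
Proof.
apply/group_setP; split; first by rewrite inE scalar_mx_is_scalar.
move=> a b; rewrite !inE GL_MxE => /is_scalar_mxP[x ->] /is_scalar_mxP[y ->].
by rewrite -scalar_mxM scalar_mx_is_scalar.
Qed.
Canonical scal2_group := Group scal2_group_set.

Lemma upper2_group_set : group_set (upper2 F).
Proof.
apply/group_setP; split; first by rewrite inE GL_1E mxE.
move=> a b; rewrite !inE GL_MxE mulmx2E => /eqP-> /eqP->.
by rewrite mul0r mulr0 addr0.
Qed.
Canonical upper2_group := Group upper2_group_set.

Lemma scal2_upper2 : scal2 F \subset upper2 F.
Proof. by apply/subsetP => a; rewrite !inE => /is_scalar_mxP[x ->]; rewrite mxE. Qed.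

Lemma norm_scal2 a : a \in 'N(scal2 F)%g.
Proof.
rewrite inE; apply/subsetP => b /imsetP[c]; rewrite !inE => /is_scalar_mxP[x c_x] ->.
rewrite conjgE !GL_MxE GL_VxE c_x mul_scalar_mx -scalemxAr mulVmx ?GL_unitmx //.
by rewrite scalemx1 scalar_mx_is_scalar.
Qed.

Lemma proj2M a b : proj2 (a * b)%g = (proj2 a * proj2 b)%g.
Proof. by rewrite /proj2 coset_morphM ?norm_scal2. Qed.

Lemma proj2V a : proj2 a^-1%g = (proj2 a)^-1%g.
Proof. by rewrite /proj2 morphV ?norm_scal2. Qed.

Lemma proj2X a k : proj2 (a ^+ k)%g = (proj2 a ^+ k)%g.
Proof. by rewrite /proj2 morphX ?norm_scal2. Qed.

Lemma proj2_eqP a b : reflect (proj2 a = proj2 b) ((a * b^-1)%g \in scal2 F).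
Proof.
by rewrite -mem_rcoset; apply: rcoset_kercosetP; apply: norm_scal2.
Qed.

Lemma proj2_scale a b (x : F) : GLval a = x *: GLval b -> proj2 a = proj2 b.
Proof.
move=> a_xb; apply/proj2_eqP; rewrite inE GL_MxE GL_VxE a_xb -scalemxAl.
by rewrite mulmxV ?GL_unitmx // scalemx1 scalar_mx_is_scalar.
Qed.

Lemma GL_expE a k : GLval (a ^+ k)%g = GLval a ^+ k.
Proof. by elim: k => [|k IHk]; rewrite ?expg0 ?expr0 // expgS GL_MxE IHk exprS. Qed.

Lemma proj2_Sgrp a : (proj2 a \in Sgrp F) = (a \in upper2 F).
Proof.
apply/idP/idP => [/imsetP[b b_up /proj2_eqP ab_scal] | ]; last exact: imset_f.
by rewrite -(mulgKV b a) groupM // (subsetP scal2_upper2).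
Qed.

Lemma proj2_in_Sgrp_rcoset a b :
  (proj2 a \in (Sgrp F :* proj2 b)%g) = (bottom_cross a b == 0).
Proof.
rewrite mem_rcoset -proj2V -proj2M proj2_Sgrp inE.
rewrite -[GLval a](mulmxKV (GL_unitmx b)) bottom_cross_mull GL_MxE GL_VxE.
by rewrite mulf_eq0 (negPf (GL_det b)) orbF.
Qed.

Lemma val_toGL (M : 'M[F]_2) : M \in unitmx -> GLval (toGL M) = M.
Proof. by rewrite /toGL val_insubd => ->. Qed.

Lemma proj2_unipscal_eq a b : a \in unipscal2 F -> b \in unipscal2 F ->
  GLval a i1 i1 * GLval b i0 i1 = GLval a i0 i1 * GLval b i1 i1 -> proj2 a = proj2 b.
Proof.
rewrite !inE => /andP[/eqP a10 /eqP a00] /andP[/eqP b10 /eqP b00] e.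
have b11_neq0 : GLval b i1 i1 != 0.
  by apply: contraNneq (GL_det b); rewrite det_mx22 b10 b00 => ->; rewrite !mulr0 subrr.
have [|x [a11 a01]] := cross_eq0_proportional _ e; first by rewrite b11_neq0.
apply: (proj2_scale (x := x)); apply: matrix2P;
  by rewrite !mxE ?a10 ?b10 ?mulr0 // a00 b00.
Qed.

End PGL2.

Section SingerCycle.
Variable F : finFieldType.
Variables mu lam : F.
Hypothesis p_primitive : primitive_poly ('X^2 + mu *: 'X + lam%:P).
Local Notation GL2 := {'GL_2[F]}.
Local Notation X := (companion2 mu lam).
Local Notation g := (toGL X).
Local Notation C := <[proj2 g]>%g.

Let lam_neq0 := primitive_companion2_lam_neq0 p_primitive.

Lemma Singer_exp_lin k : exists a b, GLval (g ^+ k)%g = a *: X + b%:M.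
Proof.
by rewrite GL_expE val_toGL ?companion2_unit //; apply: companion2_exp_lin.
Qed.

Lemma Singer_cycleP c : c \in C -> exists k, c = proj2 (g ^+ k)%g.
Proof. by case/cycleP => k ->; exists k; rewrite proj2X. Qed.

Lemma mem_Singer_cycle k : proj2 (g ^+ k)%g \in C.
Proof. by rewrite proj2X mem_cycle. Qed.

Lemma exists_Singer_cross (a : GL2) : exists k, bottom_cross a (GLval (g ^+ k)%g) = 0.
Proof.
set m1 := GLval a i1 i0; set m2 := GLval a i1 i1.
have [k Xk] : exists k, X ^+ k = m1 *: X + (mu * m1 - lam * m2)%:M.
  apply: companion2_exp_surj => //; case: (eqVneq m1 0) => //= m1_0.
  have := bottom_row_neq0 (GL_det a); rewrite -/m1 -/m2 m1_0 eqxx /= => m2_neq0.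
  by rewrite mulr0 sub0r oppr_eq0 mulf_neq0.
exists k; rewrite GL_expE val_toGL ?companion2_unit // Xk.
by rewrite /bottom_cross !companion2_linE -/m1 -/m2; ring.
Qed.

Lemma proj2_Singer_cross_eq i j :
  bottom_cross (GLval (g ^+ i)%g) (GLval (g ^+ j)%g) = 0 -> proj2 (g ^+ i)%g = proj2 (g ^+ j)%g.
Proof.
have [a1 [b1 gi]] := Singer_exp_lin i; have [a2 [b2 gj]] := Singer_exp_lin j.
rewrite gi gj bottom_cross_companion2_lin => /eqP; rewrite mulf_eq0 (negPf lam_neq0) /=.
rewrite subr_eq0 eq_sym => /eqP e.
have ab2 : (a2 != 0) || (b2 != 0).
  by have := GL_det (g ^+ j)%g; rewrite gj => /companion2_lin_det_neq0.
have [x [a1_x b1_x]] := cross_eq0_proportional ab2 e.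
apply: (proj2_scale (x := x)).
by rewrite gi gj scalerDr scalerA scale_scalar_mx a1_x b1_x.
Qed.

Lemma bract_Singer (c s : GL2) k :
  bottom_cross (GLval (c * s)%g) (GLval (g ^+ k)%g) = 0 ->
  bract C (proj2 c) (proj2 s) = proj2 (g ^+ k)%g.
Proof.
move=> cs_k; rewrite /bract; case: pickP => [c' | no_c'] /=.
  case/andP=> /Singer_cycleP[k' ->]; rewrite -proj2M proj2_in_Sgrp_rcoset => /eqP cs_k'.
  exact/proj2_Singer_cross_eq/(bottom_cross_trans (GL_det (c * s)%g) cs_k' cs_k).
have := no_c' (proj2 (g ^+ k)%g).
by rewrite mem_Singer_cycle -proj2M proj2_in_Sgrp_rcoset cs_k eqxx.
Qed.

Lemma Singer_bottom_left_neq0 k :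
  proj2 (g ^+ k)%g != 1%g -> GLval (g ^+ k)%g i1 i0 != 0.
Proof.
have [a [b gk]] := Singer_exp_lin k; rewrite gk companion2_linE mulNr oppr_eq0.
rewrite mulf_eq0 (negPf lam_neq0) /=; apply: contraNN => /eqP a0.
by apply/eqP/coset_id; rewrite inE gk a0 scale0r add0r scalar_mx_is_scalar.
Qed.

Lemma Singer_bract_unipscal_inj (w1 w2 : GL2) : w1 \in unipscal2 F -> w2 \in unipscal2 F ->
  bract C (proj2 g) (proj2 w1) = bract C (proj2 g) (proj2 w2) -> proj2 w1 = proj2 w2.
Proof.
move=> w1_U w2_U.
have [k1 gw1_k1] := exists_Singer_cross (g * w1)%g.
have [k2 gw2_k2] := exists_Singer_cross (g * w2)%g.
rewrite (bract_Singer gw1_k1) (bract_Singer gw2_k2) => e.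
have gw2_k1 : bottom_cross (GLval (g * w2)%g) (GLval (g ^+ k1)%g) = 0.
  by apply/eqP; rewrite -proj2_in_Sgrp_rcoset e proj2_in_Sgrp_rcoset gw2_k2.
have : bottom_cross (GLval (g * w1)%g) (GLval (g * w2)%g) = 0.
  apply: (bottom_cross_trans (GL_det (g ^+ k1)%g));
    by rewrite bottom_crossC ?gw1_k1 ?gw2_k1 oppr0.
move: (w1_U) (w2_U); rewrite !inE => /andP[/eqP w1_10 /eqP w1_00] /andP[/eqP w2_10 /eqP w2_00].
rewrite !GL_MxE bottom_cross_mul_unipscal // val_toGL ?companion2_unit // companion2E.
move/eqP; rewrite mulf_eq0 sqrf_eq0 oppr_eq0 (negPf lam_neq0) subr_eq0 => /eqP.
exact: proj2_unipscal_eq.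
Qed.

Lemma Singer_bract_transitive c1 c2 : c1 \in C :\ 1%g -> c2 \in C :\ 1%g ->
  exists2 s, s \in Sgrp F & bract C c1 s = c2.
Proof.
move=> /setD1P[c1_n1 /Singer_cycleP[k1 c1_k1]] /setD1P[c2_n1 /Singer_cycleP[k2 c2_k2]].
have g1_10 : GLval (g ^+ k1)%g i1 i0 != 0.
  by apply: Singer_bottom_left_neq0; rewrite -c1_k1.
have g2_10 : GLval (g ^+ k2)%g i1 i0 != 0.
  by apply: Singer_bottom_left_neq0; rewrite -c2_k2.
set s := unitri2 (GLval (g ^+ k2)%g i1 i1 / GLval (g ^+ k2)%g i1 i0
                 - GLval (g ^+ k1)%g i1 i1 / GLval (g ^+ k1)%g i1 i0).
have s_unit : s \in unitmx := unitri2_unit _.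
exists (proj2 (toGL s)); first by rewrite proj2_Sgrp inE (val_toGL s_unit) unitri2E.
rewrite c1_k1 c2_k2; apply: bract_Singer.
by rewrite GL_MxE (val_toGL s_unit) bottom_cross_unitri2.
Qed.

End SingerCycle.

Theorem mainTheorem3 (F : finFieldType) (mu lam : F) :
  primitive_poly ('X^2 + mu *: 'X + lam%:P) ->
  let xb := proj2 (toGL (companion2 mu lam)) in
  let C := <[xb]>%g in
  {in Ugrp F &, injective (fun u => bract C xb u)} /\
  (forall c1 c2, c1 \in (C :\ 1%g) -> c2 \in (C :\ 1%g) ->
     exists2 s, s \in Sgrp F & bract C c1 s = c2).
Proof.
move=> p_prim xb C; split => [_ _ /imsetP[w1 w1_U ->] /imsetP[w2 w2_U ->] | c1 c2].
  exact: Singer_bract_unipscal_inj.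
exact: Singer_bract_transitive.
Qed.
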